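(* Let $q>0$ and let $Q_1,Q_2,\dots\in\mathcal{P}_q$. Let $\mathcal{G}_\kappa$ be the RKHS of $\mathbb{R}^D$-valued functions of a matrix-valued kernel $\kappa:\mathbb{R}^D\times\mathbb{R}^D\to\mathbb{R}^{D\times D}$. Suppose that for every $\varepsilon>0$ there exist $r_\varepsilon>0$ and $g\in\mathcal{G}_\kappa$ with $\mathcal{T}_Pg(x)\ge\|x\|_2^q\mathbf{1}\{\|x\|_2>r_\varepsilon\}-\varepsilon$ for all $x\in\mathbb{R}^D$. If $\mathcal{S}(Q_n,\mathcal{T}_P,\mathcal{G}_\kappa)\to0$ as $n\to\infty$, then $(Q_n)$ has uniformly integrable $q$-th moments.
   Context: $\mathcal{T}_P$ is the diffusion Stein operator $\mathcal{T}_Pg(x)=\frac1{p(x)}\langle\nabla,p(x)m(x)g(x)\rangle=2\langle b(x),g(x)\rangle+\langle m(x),\nabla g(x)\rangle$ for a target density $p$ on $\mathbb{R}^D$, where $m=\sigma\sigma^\top+c$ with $c$ skew-symmetric, $b=\langle\nabla,pm\rangle/(2p)$ (column-wise divergence $\langle\nabla,F\rangle_i=\sum_j\partial_jF_{ji}$), $(\nabla g)_{ij}=\partial_ig_j$ and $\langle\cdot,\cdot\rangle$ the Frobenius pairing. $\mathcal{S}(Q,\mathcal{T}_P,\mathcal{G}_\kappa)=\sup_{\|g\|_{\mathcal{G}_\kappa}\le1}|\mathbb{E}_{Y\sim Q}[\mathcal{T}_Pg(Y)]|$. $\mathcal{P}_q$ is the set of probability measures with finite $q$-th moment; $(Q_n)$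 has uniformly integrable $q$-th moments if $\lim_{r\to\infty}\limsup_{n}\int_{\{\|x\|_2>r\}}\|x\|_2^q dQ_n=0$. *)

From HB Require Import structures.
From mathcomp Require Import all_boot all_order all_algebra.
From mathcomp Require Import all_classical all_reals all_analysis.
Set Implicit Arguments.
Unset Strict Implicit.
Unset Printing Implicit Defensive.
Import Order.TTheory GRing.Theory Num.Theory.
Import numFieldNormedType.Exports.
Local Open Scope classical_set_scope.
Local Open Scope ring_scope.

Section Defs.
Variables (R : realType) (D : nat).

Definition vecfun := 'rV[R]_D -> 'rV[R]_D.

Definition RD := g_sigma_algebraType (@open 'rV[R]_D).

Definition dotv (u v : 'rV[R]_D) : R := \sum_(i < D) u ord0 i * v ord0 i.
Definition norm2 (x : 'rV[R]_D) : R := Num.sqrt (\sum_(i < D) x ord0 i ^+ 2).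

Definition partial (j : 'I_D) (f : 'rV[R]_D -> R) (x : 'rV[R]_D) : R :=
  'D_(delta_mx ord0 j) f x.

Definition diff_m K (sigma : 'rV[R]_D -> 'M[R]_(D, K)) (c : 'rV[R]_D -> 'M[R]_D)
  (x : 'rV[R]_D) : 'M[R]_D := sigma x *m (sigma x)^T + c x.

(* b = <nabla, p m> / (2 p), column-wise divergence:
   b_i = (sum_j d_j (p m_{ji})) / (2 p) *)
Definition diff_b (p : 'rV[R]_D -> R) (m : 'rV[R]_D -> 'M[R]_D)
  (x : 'rV[R]_D) : 'rV[R]_D :=
  \row_(i < D) ((\sum_(j < D) partial j (fun y => p y * m y j i) x) / (2 * p x)).

(* Diffusion Stein operator T_P g = 2 <b, g> + <m, nabla g>,
   (nabla g)_{ij} = d_i g_j, Frobenius pairing. *)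
Definition stein_op (p : 'rV[R]_D -> R) (m : 'rV[R]_D -> 'M[R]_D) (g : vecfun)
  (x : 'rV[R]_D) : R :=
  2 * dotv (diff_b p m x) (g x)
  + \sum_(i < D) \sum_(j < D) m x i j * partial i (fun y => g y ord0 j) x.

Definition ipnorm (ip : vecfun -> vecfun -> R) (g : vecfun) : R := Num.sqrt (ip g g).

Definition is_vvRKHS (kappa : 'rV[R]_D -> 'rV[R]_D -> 'M[R]_D)
  (H : set vecfun) (ip : vecfun -> vecfun -> R) : Prop :=
      H (fun _ => 0) /\
      (forall f g, H f -> H g -> H (fun x => f x + g x)) /\
      (forall (a : R) f, H f -> H (fun x => a *: f x)) /\
      (forall f g, H f -> H g -> ip f g = ip g f) /\
      (forall (a b : R) f g h, H f -> H g -> H h ->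
         ip (fun x => a *: f x + b *: g x) h = a * ip f h + b * ip g h) /\
      (forall f, H f -> 0 <= ip f f) /\
      (forall f, H f -> ip f f = 0 -> f = (fun _ => 0)) /\
      (forall u : nat -> vecfun, (forall n, H (u n)) ->
         (forall e : R, 0 < e -> exists N, forall m n, (N <= m)%N -> (N <= n)%N ->
            ipnorm ip (fun x => u m x - u n x) < e) ->
         exists2 g, H g & ipnorm ip (fun x => u n x - g x) @[n --> \oo] --> (0 : R)) /\
      (* kernel sections kappa(., x) a belong to H and reproduce point evaluation *)
      (forall x (a : 'rV[R]_D), H (fun y => a *m (kappa y x)^T)) /\
      (forall g x (a : 'rV[R]_D), H g -> ip g (fun y => a *m (kappa y x)^T) = dotv (g x) a).

Definition stein_disc (Q : probability RD R) (T : vecfun -> 'rV[R]_D -> R)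
  (H : set vecfun) (ip : vecfun -> vecfun -> R) : \bar R :=
  ereal_sup [set `| (\int[Q]_x (T g x)%:E)%E |%E | g in [set g | H g /\ ipnorm ip g <= 1]].

Definition finite_moment (q : R) (Q : probability RD R) : Prop :=
  (\int[Q]_x ((norm2 x) `^ q)%:E < +oo)%E.

Definition unif_integrable_moments (q : R) (Q : nat -> probability RD R) : Prop :=
  (fun r : R => limn_esup (fun n =>
     (\int[Q n]_(x in [set x : RD | (r < norm2 x)%R]) ((norm2 x) `^ q)%:E)%E))
    @ +oo --> 0%E.

End Defs.

From HB Require Import structures.
From mathcomp Require Import all_boot all_order all_algebra.
From mathcomp Require Import all_classical all_reals all_analysis.
From mathcomp Require Import ring lra measurable_realfun.
Set Implicit Arguments.
Unset Strict Implicit.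
Unset Printing Implicit Defensive.

(* Take the witness [g] for [eps / 2] and rescale it by [C = max (||g||, 1)]
   into the unit ball of the RKHS.  As [T_P (g / C) >= - eps / (2 C)] everywhere
   and [||x||^q <= C (T_P (g / C) + eps / (2 C))] on [{||x|| > r}], integrating
   against [Q_n] gives, for every [r >= r_eps],
     [\int_{||x|| > r} ||x||^q dQ_n <= C S(Q_n) + eps / 2],
   which is at most [eps] as soon as [S(Q_n) <= eps / (2 C)]. *)

Import Order.TTheory GRing.Theory Num.Theory.
Import numFieldNormedType.Exports.
Local Open Scope classical_set_scope.
Local Open Scope ring_scope.

Section ereal_limits.
Context {R : realType}.
Local Open Scope ereal_scope.

Lemma limn_esup_le_near (u : nat -> \bar R) (a : \bar R) :
  (\forall n \near \oo, u n <= a) -> limn_esup u <= a.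
Proof.
move=> ua; apply: (@le_trans _ _ (ereal_sup (u @` [set n | u n <= a]))).
  by apply: ereal_inf_lbound; exists [set n | u n <= a].
by apply: ge_ereal_sup => _ [n una <-].
Qed.

Lemma cvge_le_near {I : Type} {F : set_system I} {FF : Filter F}
    {f : I -> \bar R} {l a : R} :
  f @ F --> l%:E -> (l < a)%R -> \forall x \near F, f x <= a%:E.
Proof.
move=> /fine_cvgP[ffin fl] la; near=> x.
rewrite -(fineK (near ffin x _)) ?lee_fin //.
by near: x; exact: cvgr_le fl _ la.
Unshelve. all: by end_near. Qed.

Lemma ge0_near_le_cvge0 {I : Type} {F : set_system I} {FF : Filter F}
    {f : I -> \bar R} :
  (forall x, 0 <= f x) -> (forall e : R, (0 < e)%R -> \forall x \near F, f x <= e%:E) ->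
  f @ F --> 0.
Proof.
move=> f0 fe; apply/fine_cvgP; split.
  by apply: filterS (fe 1%R ltr01) => x fx1; rewrite ge0_fin_numE// (le_lt_trans fx1)// ltey.
apply/cvgrPdist_le => e e0; apply: filterS (fe e e0) => x /=.
move: (f0 x); case: (f x) => //= y; rewrite !lee_fin sub0r normrN => y0 ye.
by rewrite ger0_norm.
Qed.

End ereal_limits.

Section integral_lower_bounded.
Local Open Scope ereal_scope.
Context d (T : measurableType d) (R : realType) (P : probability T R).
Variables (u : T -> R) (e : R).
Hypotheses (e_ge0 : (0 <= e)%R) (u_meas : measurable_fun setT u)
  (u_ge : forall x, (- e <= u x)%R).

(* [u^-] is bounded by [e], hence integrable, so [e] can be pulled out even
   when [\int u = +oo]. *)
Lemma integral_addr_cst : \int[P]_x (u x + e)%:E = \int[P]_x (u x)%:E + e%:E.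
Proof.
have mf : measurable_fun setT (EFin \o u) by exact/measurable_EFinP.
set f := EFin \o u in mf *.
have funeneg_le x : f^\- x <= e%:E by rewrite funenegE ge_max /f /= !lee_fin lerNl u_ge.
have fin_neg x : f^\- x \is a fin_num.
  by rewrite ge0_fin_numE ?funeneg_ge0 // (le_lt_trans (funeneg_le x)) ?ltey.
have gap_ge0 x : 0 <= e%:E - f^\- x by rewrite sube_ge0 ?fin_neg.
have mneg : measurable_fun setT (fun x => e%:E - f^\- x).
  exact/emeasurable_funB/measurable_funeneg.
have mass_neg : \int[P]_x (e%:E - f^\- x) + \int[P]_x f^\- x = e%:E.
  rewrite -ge0_integralD //; last exact: measurable_funeneg.
  under eq_integral do rewrite subeK //.
  rewrite integral_cst // -[RHS]mule1; congr (_ * _); exact: probability_setT.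
have split_pos : \int[P]_x (u x + e)%:E = \int[P]_x f^\+ x + \int[P]_x (e%:E - f^\- x).
  rewrite -ge0_integralD //; last exact: measurable_funepos.
  apply: eq_integral => x _.
  by rewrite EFinD -[(u x)%:E]/(f x) {1}(funeposneg f) addeAC addeA.
have fin_int_neg : \int[P]_x f^\- x \is a fin_num.
  rewrite ge0_fin_numE ?integral_ge0 // (@le_lt_trans _ _ e%:E) ?ltey //.
  by rewrite -mass_neg leeDr // integral_ge0.
by rewrite split_pos [in RHS]integralE -[in RHS]mass_neg [RHS]addeCA subeK // addeC.
Qed.

Lemma integral_le_mul_addr_cst (A : set T) (f : T -> R) (c : R) :
  measurable A -> measurable_fun A f -> (0 <= c)%R ->
  (forall x, A x -> (0 <= f x <= c * (u x + e))%R) ->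
  \int[P]_(x in A) (f x)%:E <= c%:E * (\int[P]_x (u x)%:E + e%:E).
Proof.
move=> mA mf c0 fA.
have ue_ge0 x : (0 <= u x + e)%R by rewrite -lerBlDr sub0r.
have mue : measurable_fun setT (fun x => (u x + e)%:E).
  exact/measurable_EFinP/measurable_funD.
rewrite -integral_addr_cst -ge0_integralZl_EFin //; last by move=> x _; rewrite lee_fin.
apply: (@le_trans _ _ (\int[P]_(x in A) (c%:E * (u x + e)%:E))).
  apply: ge0_le_integral => //.
  - by move=> x /fA /andP[]; rewrite lee_fin.
  - exact/measurable_EFinP.
  - by apply: (measurable_funS measurableT) => //; exact: emeasurable_funM.
  - by move=> x /fA /andP[_]; rewrite -EFinM lee_fin.
apply: ge0_subset_integral => //; first exact: emeasurable_funM.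
by move=> x _; rewrite -EFinM lee_fin mulr_ge0.
Qed.
End integral_lower_bounded.

Section norm2.
Variables (R : realType) (D : nat).

Lemma norm2_continuous : continuous (@norm2 R D).
Proof.
move=> x; apply: continuous_comp; last exact: sqrt_continuous.
apply: (@continuous_big _ _ _ _ _ add_continuous) => i _ y.
have coord := @coord_continuous R 1 D ord0 i.
rewrite /continuous_at; under eq_cvg do rewrite expr2.
by rewrite expr2; exact: cvgM (coord y) (coord y).
Qed.

Lemma measurable_norm2 : measurable_fun setT (@norm2 R D : RD R D -> R).
Proof.
apply: (measurability _ (RGenOpens.measurableE R)).
move=> _ [_ [a [b ->] <-]]; rewrite setTI; apply: sub_sigma_algebra.
exact: (continuousP _).1 norm2_continuous _ (interval_open _ _).
Qed.

Lemma measurable_norm2_gt (r : R) : measurable [set x : RD R D | r < norm2 x].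
Proof.
have -> : [set x : RD R D | r < norm2 x] = setT `&` (@norm2 R D @^-1` `]r, +oo[).
  by apply/seteqP; split => x /=; rewrite in_itv /= andbT => // -[].
exact: measurable_norm2 measurableT _ (measurable_itv _).
Qed.

Lemma measurable_powR_norm2 (q : R) (A : set (RD R D)) :
  measurable_fun A (fun x : RD R D => norm2 x `^ q).
Proof.
apply: (measurable_funS measurableT) => //.
exact: measurableT_comp (measurable_powR q) measurable_norm2.
Qed.

End norm2.

Section stein_op.
Variables (R : realType) (D : nat).

Lemma partialZ (a : R) (f : 'rV[R]_D -> R) (j : 'I_D) x :
  derivable f x (delta_mx ord0 j) ->
  partial j (fun y => a * f y) x = a * partial j f x.
Proof. by move=> df; rewrite /partial (_ : (fun y => _) = a \*: f) // deriveZ. Qed.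

Lemma stein_opZ (p : 'rV[R]_D -> R) (m : 'rV[R]_D -> 'M[R]_D) (g : vecfun R D) (a : R) x :
  differentiable g x -> stein_op p m (fun y => a *: g y) x = a * stein_op p m g x.
Proof.
move=> dg.
have coord_der i j : derivable (fun y => g y ord0 j) x (delta_mx ord0 i).
  apply/diff_derivable/(@differentiable_comp _ _ _ _ g (fun N => N ord0 j)) => //.
  exact: differentiable_coord.
rewrite /stein_op /dotv mulrDr; congr (_ + _).
  rewrite [RHS]mulrCA [in RHS]mulr_sumr; congr (_ * _); apply: eq_bigr => i _.
  by rewrite !mxE mulrCA.
rewrite mulr_sumr; apply: eq_bigr => i _; rewrite mulr_sumr; apply: eq_bigr => j _.
rewrite (_ : (fun y => _) = fun y => a * g y ord0 j); last by apply/funext => y; rewrite mxE.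
by rewrite partialZ // mulrCA.
Qed.

End stein_op.

Section stein_rkhs.
Variables (R : realType) (D : nat) (p : 'rV[R]_D -> R) (m : 'rV[R]_D -> 'M[R]_D)
  (kappa : 'rV[R]_D -> 'rV[R]_D -> 'M[R]_D)
  (G : set (vecfun R D)) (ip : vecfun R D -> vecfun R D -> R).
Hypotheses (G_rkhs : is_vvRKHS kappa G ip)
  (G_differentiable : forall g, G g -> forall x, differentiable g x)
  (G_measurable : forall g, G g -> measurable_fun setT (stein_op p m g : RD R D -> R)).

Local Notation T := (stein_op p m).

Let G_scale a g : G g -> G (fun x => a *: g x).
Proof. by case: G_rkhs => _ [_ [+ _]]; apply. Qed.

Lemma ipnorm_scale g a : G g -> 0 <= a -> ipnorm ip (fun x => a *: g x) = a * ipnorm ip g.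
Proof.
case: G_rkhs => _ [_ [_ [ip_sym [ip_lin _]]]] Gg a0.
have Gag := G_scale a Gg.
have ag : (fun x => a *: g x) = (fun x => a *: g x + 0 *: g x).
  by apply/funext => x; rewrite scale0r addr0.
have ip_ag : ip (fun x => a *: g x) (fun x => a *: g x) = a ^+ 2 * ip g g.
  rewrite [X in ip X _]ag ip_lin // mul0r addr0 ip_sym //.
  by rewrite ag ip_lin // mul0r addr0 mulrA -expr2.
by rewrite /ipnorm ip_ag sqrtrM ?sqr_ge0 // sqrtr_sqr ger0_norm.
Qed.

Lemma ipnorm_scale_max_le1 g : G g ->
  ipnorm ip (fun x => (Num.max (ipnorm ip g) 1)^-1 *: g x) <= 1.
Proof.
move=> Gg; have C_gt0 : 0 < Num.max (ipnorm ip g) 1 by rewrite lt_max ltr01 orbT.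
rewrite ipnorm_scale ?invr_ge0 ?(ltW C_gt0) // ler_pdivrMl // mulr1.
by rewrite le_max lexx.
Qed.

Lemma integral_le_stein_disc (Q : probability (RD R D) R) g :
  G g -> ipnorm ip g <= 1 -> (\int[Q]_x (T g x)%:E <= stein_disc Q T G ip)%E.
Proof.
by move=> Gg g_le1; apply: le_trans (lee_abs _) _; apply: ereal_sup_ubound; exists g.
Qed.

Lemma tail_moment_le_stein_disc (Q : probability (RD R D) R) (q e r : R) g :
  G g -> 0 <= e -> (forall x, - e <= T g x) ->
  (forall x, r < norm2 x -> norm2 x `^ q - e <= T g x) ->
  (\int[Q]_(x in [set x : RD R D | (r < norm2 x)%R]) (norm2 x `^ q)%:E
    <= (Num.max (ipnorm ip g) 1)%:E * stein_disc Q T G ip + e%:E)%E.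
Proof.
move=> Gg e_ge0 Tg_ge Tg_tail.
set C := Num.max (ipnorm ip g) 1.
have C_gt0 : 0 < C by rewrite lt_max ltr01 orbT.
have C_ge0 := ltW C_gt0.
pose g' x := C^-1 *: g x.
have Gg' : G g' := G_scale _ Gg.
have Tg' x : T g' x = C^-1 * T g x by rewrite stein_opZ //; exact: G_differentiable.
have Tg'_ge x : - (e / C) <= T g' x.
  by rewrite Tg' -mulNr mulrC; apply: ler_wpM2l; rewrite ?invr_ge0.
have tail_le x : r < norm2 x -> 0 <= norm2 x `^ q <= C * (T g' x + e / C).
  move=> /Tg_tail; rewrite powR_ge0 Tg' /=.
  have -> : C * (C^-1 * T g x + e / C) = T g x + e by field; rewrite gt_eqF.
  lra.
apply: le_trans (integral_le_mul_addr_cst Q (divr_ge0 e_ge0 C_ge0)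
  (G_measurable Gg') Tg'_ge (measurable_norm2_gt r) (@measurable_powR_norm2 _ _ q _)
  C_ge0 tail_le) _.
have Tg'_le_disc := integral_le_stein_disc Q Gg' (ipnorm_scale_max_le1 Gg).
apply: le_trans (lee_wpmul2l _ (leeD2r _ Tg'_le_disc)) _; first by rewrite lee_fin.
by rewrite muleDr ?fin_num_adde_defl // -EFinM mulrCA divff ?mulr1 ?gt_eqF.
Qed.

End stein_rkhs.

Theorem mainTheorem5 (R : realType) (D K : nat)
  (p : 'rV[R]_D -> R) (sigma : 'rV[R]_D -> 'M[R]_(D, K)) (c : 'rV[R]_D -> 'M[R]_D)
  (kappa : 'rV[R]_D -> 'rV[R]_D -> 'M[R]_D)
  (G : set (vecfun R D)) (ip : vecfun R D -> vecfun R D -> R)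
  (q : R) (Q : nat -> probability (RD R D) R) :
  (forall x, 0 < p x) ->
  (forall x, (c x)^T = - c x) ->
  is_vvRKHS kappa G ip ->
  (forall g, G g -> forall x, differentiable g x) ->
  (forall g, G g -> measurable_fun setT
     (stein_op p (diff_m sigma c) g : RD R D -> R)) ->
  0 < q ->
  (forall n, finite_moment q (Q n)) ->
  (forall eps : R, 0 < eps -> exists2 r : R, 0 < r &
     exists2 g, G g & forall x : 'rV[R]_D,
       stein_op p (diff_m sigma c) g x >=
         (norm2 x `^ q) * ((r < norm2 x)%R : bool)%:R - eps) ->
  stein_disc (Q n) (stein_op p (diff_m sigma c)) G ip @[n --> \oo] --> 0%E ->
  unif_integrable_moments q Q.
Proof.
move=> _ _ G_rkhs G_diff G_meas _ _ witness disc_cvg0.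
set T := stein_op p (diff_m sigma c) in witness disc_cvg0 *.
apply: ge0_near_le_cvge0 => [r|eps eps_gt0].
  apply: limf_esup_ge0 => [|n]; first exact: filter_not_empty.
  by apply: integral_ge0 => x _; rewrite lee_fin powR_ge0.
have eps2_gt0 : 0 < eps / 2 by rewrite divr_gt0.
have [r0 _ [g Gg Tg_ge]] := witness _ eps2_gt0.
set C := Num.max (ipnorm ip g) 1.
have C_gt0 : 0 < C by rewrite lt_max ltr01 orbT.
have disc_small : \forall n \near \oo, (stein_disc (Q n) T G ip <= (eps / 2 / C)%:E)%E.
  exact: cvge_le_near disc_cvg0 (divr_gt0 eps2_gt0 C_gt0).
near=> r; apply: limn_esup_le_near; apply: filterS disc_small => n disc_n.
apply: le_trans (tail_moment_le_stein_disc G_rkhs G_diff G_meas (Q n) (e := eps / 2) Gg _ _ _) _.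
- exact: ltW.
- move=> x; apply: le_trans (Tg_ge x).
  by rewrite -[X in X <= _]sub0r lerD2r mulr_ge0 ?powR_ge0 ?ler0n.
- move=> x rx; have r0x : r0 < norm2 x.
    by apply: le_lt_trans rx; near: r; exact: nbhs_pinfty_ge (num_real r0).
  by have := Tg_ge x; rewrite r0x mulr1.
apply: le_trans (leeD2r _ (lee_wpmul2l _ disc_n)) _; first by rewrite lee_fin ltW.
by rewrite -EFinM -EFinD lee_fin mulrC divfK ?gt_eqF // -splitr.
Unshelve. all: by end_near.
Qed.
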